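(* $\mathrm{Im}\,\Phi$ is a subgroup of $M(\mathcal{O}_{\bf q}(k^{n}))$, and it is normal in $M(\mathcal{O}_{\bf q}(k^{n}))$.
   Context: Let $k$ be a field, $n\ge1$, and ${\bf q}=(q_{ij})\in\mathcal M_n(k)$ with $q_{ij}q_{ji}=1$, $q_{ii}=1$ for all $i,j$. $\mathcal{O}_{\bf q}(k^{n})=k\langle x_1,\dots,x_n\rangle/\langle x_jx_i-q_{ij}x_ix_j\rangle$, graded with $\deg x_i=1$. $M(\mathcal{O}_{\bf q}(k^{n}))$ is the set of $A=(a_{ij})\in \mathrm{GL}_n(k)$ such that $x_i\mapsto \sum_j a_{ji}x_j$ extends to a graded algebra automorphism of $\mathcal{O}_{\bf q}(k^{n})$; it is a subgroup of $\mathrm{GL}_n(k)$ isomorphic to $\mathrm{Aut}_{\rm gr}(\mathcal{O}_{\bf q}(k^{n}))$. $B(i)=\{1\le i'\le n: q_{i'j}=q_{ij}\ \forall j\}$; the distinct blocks $B_1,\dots,B_m$ partition $\{1,\dots,n\}$. $\Phi:\prod_{w=1}^m\mathrm{GL}_{|B_w|}(k)\to\mathrm{GL}_n(k)$ sends $(M_1,\dots,M_m)$ to the matrix whose submatrix with rows $B_w$ and columns $B_v$ (indices in increasing order) is $\delta_{wv}M_w$; it is an injective group homomorphism, and $\mathrm{Im}\,\Phi$ is the set of ${\bf m}=(m_{ij})\in\mathrm{GL}_n(k)$ with $m_{ij}=0$ whenever $B(i)\ne B(j)$. *)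

From HB Require Import structures.
From mathcomp Require Import all_boot all_order all_algebra.
Set Implicit Arguments.
Unset Strict Implicit.
Unset Printing Implicit Defensive.
Import GRing.Theory.
Local Open Scope ring_scope.

Definition qmatrix (k : fieldType) (n : nat) (q : 'M[k]_n) : Prop :=
  (forall i j, q i j * q j i = 1) /\ (forall i, q i i = 1).

Definition alg_hom (k : fieldType) (A B : algType k) (f : A -> B) : Prop :=
  [/\ forall a b, f (a + b) = f a + f b,
      forall (c : k) a, f (c *: a) = c *: f a,
      forall a b, f (a * b) = f a * f b
    & f 1 = 1].

Definition qrel (k : fieldType) (n : nat) (q : 'M[k]_n) (B : algType k)
    (y : 'I_n -> B) : Prop :=
  forall i j, y j * y i = q i j *: (y i * y j).

(* (A, x) is a presentation of O_q(k^n) = k<x_1..x_n>/<x_j x_i - q_ij x_i x_j>,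
   i.e. it satisfies the universal property of the algebra given by
   generators x_1..x_n and these relations. *)
Definition is_Oq (k : fieldType) (n : nat) (q : 'M[k]_n) (A : algType k)
    (x : 'I_n -> A) : Prop :=
  qrel q x /\
  forall (B : algType k) (y : 'I_n -> B), qrel q y ->
    exists f : A -> B,
      [/\ alg_hom f, (forall i, f (x i) = y i)
        & forall g : A -> B, alg_hom g -> (forall i, g (x i) = y i) ->
            forall a, g a = f a].

(* M(O_q(k^n)) : invertible a = (a_ij) such that x_i |-> sum_j a_ji x_j extends
   to an algebra automorphism of O_q(k^n) (such an automorphism maps the
   degree-one generators to degree-one elements, hence is graded). *)
Definition Mq (k : fieldType) (n : nat) (A : algType k) (x : 'I_n -> A)
    (a : 'M[k]_n) : Prop :=
  a \in unitmx /\
  exists s : A -> A,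
    [/\ alg_hom s, bijective s & forall i, s (x i) = \sum_j a j i *: x j].

Definition blk (k : fieldType) (n : nat) (q : 'M[k]_n) (i : 'I_n) : {set 'I_n} :=
  [set i' | [forall j, q i' j == q i j]].

Lemma blk_mem (k : fieldType) (n : nat) (q : 'M[k]_n) (i : 'I_n) : i \in blk q i.
Proof. by rewrite inE; apply/forallP => j. Qed.

(* Phi: a family of matrices M_B (one for each block B, rows/columns of B
   indexed in increasing order via enum_rank_in) is sent to the block
   diagonal n x n matrix whose (B(i),B(j)) block is delta M_B(i). *)
Definition Phi (k : fieldType) (n : nat) (q : 'M[k]_n)
    (Ms : forall S : {set 'I_n}, 'M[k]_#|S|) : 'M[k]_n :=
  \matrix_(i, j)
     if blk q i == blk q j then
       Ms (blk q i) (enum_rank_in (blk_mem q i) i) (enum_rank_in (blk_mem q i) j)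
     else 0.

Definition ImPhi (k : fieldType) (n : nat) (q : 'M[k]_n) (m : 'M[k]_n) : Prop :=
  exists Ms : forall S : {set 'I_n}, 'M[k]_#|S|,
    (forall i, Ms (blk q i) \in unitmx) /\ m = Phi q Ms.

From HB Require Import structures.
From mathcomp Require Import all_boot all_order all_algebra.
From mathcomp Require Import ring.
Set Implicit Arguments.
Unset Strict Implicit.
Unset Printing Implicit Defensive.
Import GRing.Theory.
Local Open Scope ring_scope.

(* The block-diagonal invertible matrices form exactly Im Phi, hence a group.
   Since q_dc = q_ij whenever d is in B(i) and c in B(j), such a matrix preserves
   the relations x_j x_i = q_ij x_i x_j, so by the universal property it induces an
   automorphism.  Conversely, the matrix a of an automorphism preserves the
   relations in every algebra; realising them in k[X] and in a four-dimensional
   algebra with y1^2 = y2^2 = 0, y2 y1 = t y1 y2 extracts the coefficients of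
   x_c^2 and x_c x_d, whence q_cd = q_ij whenever a_ci and a_dj are nonzero.  This
   forces a m a^-1 to be block diagonal for block-diagonal m. *)

Lemma scalerIv (k : fieldType) (V : lmodType k) (v : V) :
  v != 0 -> injective ( *:%R^~ v : k -> V).
Proof.
move=> nz a b /eqP; rewrite -subr_eq0 -scalerBl scaler_eq0 (negbTE nz) orbF.
by rewrite subr_eq0 => /eqP.
Qed.

Lemma sum_neq0 (V : nmodType) (I : finType) (F : I -> V) :
  \sum_i F i != 0 -> exists i, F i != 0.
Proof.
move=> nz; apply/existsP; apply: contraNT nz => /existsPn F0.
by rewrite big1 // => i _; apply/eqP/negPn/F0.
Qed.

Section Blocks.

Variables (k : fieldType) (n : nat) (q : 'M[k]_n).

Lemma blkP i j : reflect (forall w, q j w = q i w) (j \in blk q i).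
Proof. by rewrite inE; apply: (iffP forallP) => H w; apply/eqP/H. Qed.

Lemma blk_eqE i j : (blk q i == blk q j) = (j \in blk q i).
Proof.
apply/eqP/idP => [->|/blkP qji]; first exact: blk_mem.
by apply/setP => l; rewrite !inE; apply: eq_forallb => w; rewrite qji.
Qed.

Lemma blk_eqP i j : reflect (forall w, q i w = q j w) (blk q i == blk q j).
Proof. by rewrite blk_eqE; apply: (iffP (blkP _ _)) => qij w; rewrite qij. Qed.

Definition blockdiag (m : 'M[k]_n) := forall i j, m i j != 0 -> blk q i = blk q j.

Lemma blockdiag1 : blockdiag 1%:M.
Proof. by move=> i j; rewrite mxE; have [->|_] := eqVneq i j; rewrite ?eqxx. Qed.

Lemma blockdiag_mul m1 m2 : blockdiag m1 -> blockdiag m2 -> blockdiag (m1 *m m2).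
Proof.
move=> b1 b2 i j; rewrite mxE => /sum_neq0[l]; rewrite mulf_eq0 negb_or.
by case/andP => /b1 -> /b2.
Qed.

Lemma PhiE {Ms i j} {S : {set 'I_n}} {x0 : 'I_n} (hx : x0 \in S) : blk q i = S ->
  Phi q Ms i j = if j \in S then Ms S (enum_rank_in hx i) (enum_rank_in hx j) else 0.
Proof.
move=> hS; subst S; rewrite mxE blk_eqE; case: ifP => // hj.
by rewrite !(eq_enum_rank_in (blk_mem q i) hx) ?blk_mem.
Qed.

Lemma blockdiag_Phi Ms : blockdiag (Phi q Ms).
Proof. by move=> i j; rewrite mxE; case: ifP => [/eqP|]; rewrite ?eqxx. Qed.

Lemma Phi_mul Ms Ns : Phi q Ms *m Phi q Ns = Phi q (fun S => Ms S *m Ns S).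
Proof.
apply/matrixP => i j; rewrite mxE (PhiE (blk_mem q i)) //.
rewrite (bigID (mem (blk q i))) /= [X in _ + X]big1 ?addr0; last first.
  by move=> l /negbTE li; rewrite (PhiE (blk_mem q i)) // li mul0r.
case: ifP => hj; last first.
  apply: big1 => l li; have /eqP eli : blk q l == blk q i by rewrite eq_sym blk_eqE.
  by rewrite (PhiE (blk_mem q i) eli) hj mulr0.
rewrite mxE (big_enum_rank (blk_mem q i)) /=; apply: eq_bigr => l li.
have /eqP eli : blk q l == blk q i by rewrite eq_sym blk_eqE.
by rewrite !(PhiE (blk_mem q i)) ?li ?hj.
Qed.

Lemma Phi1 : Phi q (fun _ => 1%:M) = 1%:M.
Proof.
apply/matrixP => i j; rewrite (PhiE (blk_mem q i)) // !mxE.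
case: ifP => [hj|].
  congr ((_ : bool)%:R).
  by apply/eqP/eqP => [/(enum_rank_in_inj (blk_mem q i) hj)|->].
by case: eqP => // ->; rewrite blk_mem.
Qed.

Lemma Phi_mulV Ms : (forall i, Ms (blk q i) \in unitmx) ->
  Phi q Ms *m Phi q (fun S => invmx (Ms S)) = 1%:M.
Proof.
move=> uMs; rewrite Phi_mul -Phi1; apply/matrixP => i j.
by rewrite [LHS]mxE [RHS]mxE mulmxV.
Qed.

Definition blk_restr (S : {set 'I_n}) (m : 'M[k]_n) : 'M[k]_#|S| :=
  \matrix_(r, s) m (enum_val r) (enum_val s).

Lemma Phi_restr m : blockdiag m -> Phi q (blk_restr^~ m) = m.
Proof.
move=> bm; apply/matrixP => i j; rewrite (PhiE (blk_mem q i)) // mxE.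
case: ifP => [hj|]; first by rewrite !enum_rankK_in ?blk_mem.
by case: (m i j =P 0) => // /eqP/bm ->; rewrite blk_mem.
Qed.

Lemma blk_restr_mul i m1 m2 : blockdiag m1 ->
  blk_restr (blk q i) (m1 *m m2) = blk_restr (blk q i) m1 *m blk_restr (blk q i) m2.
Proof.
move=> b1; apply/matrixP => r s; rewrite !mxE.
rewrite (bigID (mem (blk q i))) /= [X in _ + X]big1 ?addr0; last first.
  move=> l /negP li; case: (m1 (enum_val r) l =P 0) => [->|/eqP/b1 e].
    by rewrite mul0r.
  by case: li; rewrite -blk_eqE -e blk_eqE enum_valP.
by rewrite big_enum_val; apply: eq_bigr => t _; rewrite !mxE.
Qed.

Lemma blk_restr1 S : blk_restr S 1%:M = 1%:M.
Proof. by apply/matrixP => r s; rewrite !mxE (inj_eq enum_val_inj). Qed.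

Lemma ImPhiP m : ImPhi q m <-> m \in unitmx /\ blockdiag m.
Proof.
split=> [[Ms [uMs ->]]|[um bm]].
  by split; [case: (mulmx1_unit (Phi_mulV uMs)) | exact: blockdiag_Phi].
exists (blk_restr^~ m); split; last by rewrite Phi_restr.
move=> i; apply: (proj1 (@mulmx1_unit _ _ _ (blk_restr (blk q i) (invmx m)) _)).
by rewrite -blk_restr_mul // mulmxV // blk_restr1.
Qed.

Lemma blockdiag_inv m : m \in unitmx -> blockdiag m -> blockdiag (invmx m).
Proof.
move=> um bm; have [Ms [uMs ->]] : ImPhi q m by exact/ImPhiP.
have V := Phi_mulV uMs; have [uPhi _] := mulmx1_unit V.
rewrite -[invmx _]mulmx1 -V mulKmx //; exact: blockdiag_Phi.
Qed.

End Blocks.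

Section AlgHom.

Variables (k : fieldType) (A B C : algType k).

Lemma alg_hom0 (f : A -> B) : alg_hom f -> f 0 = 0.
Proof. by case=> fD _ _ _; apply: (addIr (f 0)); rewrite -fD !add0r. Qed.

Lemma alg_hom_sum (f : A -> B) (I : finType) (F : I -> A) :
  alg_hom f -> f (\sum_i F i) = \sum_i f (F i).
Proof. by move=> hf; apply: (big_morph f _ (alg_hom0 hf)); case: hf. Qed.

Lemma alg_hom_comp (f : A -> B) (g : B -> C) :
  alg_hom f -> alg_hom g -> alg_hom (g \o f).
Proof.
case=> fD fZ fM f1 [gD gZ gM g1]; split => /= [a b|c a|a b|].
- by rewrite fD gD.
- by rewrite fZ gZ.
- by rewrite fM gM.
- by rewrite f1 g1.
Qed.

Lemma alg_hom_can (f : A -> B) (g : B -> A) :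
  alg_hom f -> cancel f g -> cancel g f -> alg_hom g.
Proof.
case=> fD fZ fM f1 fK gK; split => [u v|c u|u v|].
- by rewrite -{1}(gK u) -{1}(gK v) -fD fK.
- by rewrite -{1}(gK u) -fZ fK.
- by rewrite -{1}(gK u) -{1}(gK v) -fM fK.
- by rewrite -f1 fK.
Qed.

End AlgHom.

Definition mxsubst (k : fieldType) (n : nat) (B : algType k) (a : 'M[k]_n)
    (y : 'I_n -> B) (i : 'I_n) : B :=
  \sum_j a j i *: y j.

Section Substitution.

Variables (k : fieldType) (n : nat) (B : algType k).
Implicit Types (a b : 'M[k]_n) (y : 'I_n -> B).

Lemma alg_hom_mxsubst (C : algType k) (f : B -> C) a y (z : 'I_n -> C) i :
  alg_hom f -> (forall j, f (y j) = z j) -> f (mxsubst a y i) = mxsubst a z i.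
Proof.
move=> hf fy; rewrite alg_hom_sum //; apply: eq_bigr => j _.
by case: hf => _ -> _ _; rewrite fy.
Qed.

Lemma mxsubstM a b y i : mxsubst a (mxsubst b y) i = mxsubst (b *m a) y i.
Proof.
rewrite /mxsubst; under eq_bigr => j _ do rewrite scaler_sumr.
rewrite exchange_big; apply: eq_bigr => l _.
by rewrite mxE scaler_suml; apply: eq_bigr => j _; rewrite scalerA mulrC.
Qed.

Lemma mxsubst1 y i : mxsubst 1%:M y i = y i.
Proof.
rewrite /mxsubst (bigD1 i) //= big1 ?addr0 => [|j /negbTE ji]; rewrite mxE.
  by rewrite eqxx scale1r.
by rewrite ji scale0r.
Qed.

Lemma mxsubst_mul a b y i j :
  mxsubst a y i * mxsubst b y j = \sum_c \sum_d (a c i * b d j) *: (y c * y d).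
Proof.
rewrite mulr_suml; apply: eq_bigr => c _; rewrite mulr_sumr; apply: eq_bigr => d _.
by rewrite -scalerAl -scalerAr scalerA.
Qed.

End Substitution.

Definition qrel_preserving (k : fieldType) (n : nat) (q a : 'M[k]_n) : Prop :=
  forall (B : algType k) (y : 'I_n -> B), qrel q y -> qrel q (mxsubst a y).

Lemma blockdiag_qrel_preserving (k : fieldType) (n : nat) (q m : 'M[k]_n) :
  qmatrix q -> blockdiag q m -> qrel_preserving q m.
Proof.
move=> [qV _] bm B y hy i j.
rewrite !mxsubst_mul exchange_big scaler_sumr; apply: eq_bigr => d _.
rewrite scaler_sumr; apply: eq_bigr => c _.
have [z|] := eqVneq (m c j * m d i) 0.
  by rewrite z scale0r mulrC z scale0r scaler0.
rewrite mulf_eq0 negb_or => /andP[/bm/eqP/blk_eqP qcj /bm/eqP/blk_eqP qdi].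
have -> : q i j = q d c by rewrite qdi -[RHS]mulr1 -(qV j i) mulrA -qcj qV mul1r.
by rewrite (hy d c) !scalerA [in LHS]mulrC (mulrC (m c j)).
Qed.

Section Presentation.

Variables (k : fieldType) (n : nat) (q : 'M[k]_n) (A : algType k) (x : 'I_n -> A).
Hypothesis hA : is_Oq q x.

Lemma Oq_hom_id (h : A -> A) : alg_hom h -> (forall i, h (x i) = x i) -> h =1 id.
Proof.
move=> hh hx a; have [f [_ _ f_uniq]] := hA.2 A x hA.1.
by rewrite (f_uniq h hh hx) -(f_uniq id) //; split.
Qed.

Lemma Mq_qrel_preserving a : Mq x a -> qrel_preserving q a.
Proof.
case=> _ [s [hs _ sx]] B y hy i j; have [f [hf fx _]] := hA.2 B y hy.
have fs l : f (s (x l)) = mxsubst a y l by rewrite sx (alg_hom_mxsubst _ _ hf fx).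
have [_ sZ sM _] := hs; have [_ fZ fM _] := hf.
by have := congr1 (f \o s) (hA.1 i j); rewrite /= sM sZ sM fM fZ fM !fs.
Qed.

Lemma Mq_of_qrel_preserving a : a \in unitmx ->
  qrel_preserving q a -> qrel_preserving q (invmx a) -> Mq x a.
Proof.
move=> ua qa qa'; have [f [hf fx _]] := hA.2 A _ (qa _ _ hA.1).
have [g [hg gx _]] := hA.2 A _ (qa' _ _ hA.1).
split => //; exists f; split => //; exists g.
- apply: Oq_hom_id (alg_hom_comp hf hg) _ => i /=.
  by rewrite fx (alg_hom_mxsubst _ _ hg gx) mxsubstM mulVmx // mxsubst1.
- apply: Oq_hom_id (alg_hom_comp hg hf) _ => i /=.
  by rewrite gx (alg_hom_mxsubst _ _ hf fx) mxsubstM mulmxV // mxsubst1.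
Qed.

Lemma Mq_inv a : Mq x a -> Mq x (invmx a).
Proof.
case=> ua [s [hs [g sK gK] sx]]; split; first by rewrite unitmx_inv.
exists g; split; [exact: alg_hom_can sK gK | by exists s | move=> i].
apply: (can_inj sK).
by rewrite gK (alg_hom_mxsubst _ _ hs sx) mxsubstM mulmxV // mxsubst1.
Qed.

End Presentation.

Lemma mul_qplane (k : fieldType) (B : algType k) (t : k) (e1 e2 : B) :
    e1 * e1 = 0 -> e2 * e2 = 0 -> e2 * e1 = t *: (e1 * e2) ->
  forall al be ga de : k,
  (al *: e1 + be *: e2) * (ga *: e1 + de *: e2) =
    (al * de + be * ga * t) *: (e1 * e2).
Proof.
move=> e11 e22 e21 al be ga de.
rewrite mulrDl !mulrDr -!scalerAl -!scalerAr !scalerA e11 e22 e21 scalerA.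
by rewrite !scaler0 add0r addr0 scalerDl.
Qed.

Lemma qplane_witness (k : fieldType) (t : k) : exists e1 e2 : 'M[k]_4,
  [/\ e1 * e1 = 0, e2 * e2 = 0, e2 * e1 = t *: (e1 * e2) & e1 * e2 != 0].
Proof.
exists (delta_mx 1 0 + delta_mx 3 2), (delta_mx 2 0 + t *: delta_mx 3 1).
rewrite -!mulmxE !mulmxDl !mulmxDr -!scalemxAl -!scalemxAr !mul_delta_mx_cond /=.
rewrite !mulr0n !mulr1n !scaler0 !add0r !addr0; split => //.
apply/negP => /eqP/matrixP/(_ 3 0); by rewrite !mxE /= => /eqP; rewrite oner_eq0.
Qed.

Section CoefficientConditions.

Variables (k : fieldType) (n : nat) (q a : 'M[k]_n).
Hypotheses (hq : qmatrix q) (qa : qrel_preserving q a).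

Lemma qrel_preserving_coef_diag c i j : a c j * a c i = q i j * (a c i * a c j).
Proof.
(* No normal form for O_q is available, so the coefficient of x_c^2 is read off
   after sending x_c to X and the other generators to 0. *)
pose y e : {poly k} := if e == c then 'X else 0.
have hy : qrel q y.
  move=> u v; rewrite /y; have [->|nu] := eqVneq u c; have [->|nv] := eqVneq v c;
    by rewrite ?mul0r ?mulr0 ?scaler0 // hq.2 scale1r.
have yc l : mxsubst a y l = a c l *: 'X.
  rewrite /mxsubst (bigD1 c) //= big1 ?addr0 /y ?eqxx // => e /negbTE ->.
  by rewrite scaler0.
have nzX2 : 'X * 'X != 0 :> {poly k} by rewrite mulf_neq0 ?polyX_eq0.
have := qa hy i j; rewrite !yc -!scalerAl -!scalerAr !scalerA.
by move/(scalerIv nzX2)->; rewrite mulrA.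
Qed.

Lemma qrel_preserving_coef c d i j : c != d ->
  a c j * a d i + a d j * a c i * q c d =
    q i j * (a c i * a d j + a d i * a c j * q c d).
Proof.
move=> ncd; have [e1 [e2 [e11 e22 e21 e12]]] := qplane_witness (q c d).
pose y l : 'M[k]_4 := if l == c then e1 else if l == d then e2 else 0.
have ndc : d != c by rewrite eq_sym.
have hy : qrel q y.
  move=> u v; rewrite /y.
  have [->|uc] := eqVneq u c; have [->|vc] := eqVneq v c;
    rewrite ?eqxx ?(negbTE ncd) ?(negbTE ndc) ?(negbTE uc) ?(negbTE vc).
  - by rewrite e11 scaler0.
  - by have [->|nvd] := eqVneq v d; rewrite ?eqxx ?mul0r ?mulr0 ?scaler0 ?e21.
  - have [->|nud] := eqVneq u d; rewrite ?eqxx ?mulr0 ?mul0r ?scaler0 //.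
    by rewrite e21 scalerA hq.1 scale1r.
  - have [->|nud] := eqVneq u d; have [->|nvd] := eqVneq v d;
      by rewrite ?eqxx ?mulr0 ?mul0r ?scaler0 ?e22 ?scaler0.
have yc l : mxsubst a y l = a c l *: e1 + a d l *: e2.
  rewrite /mxsubst (bigD1 c) //= (bigD1 d) 1?eq_sym //= big1 ?addr0.
    by rewrite /y eqxx (negbTE ndc) eqxx.
  by move=> e /andP[/negbTE ed /negbTE ec]; rewrite /y ed ec scaler0.
have := qa hy i j; rewrite !yc !(mul_qplane e11 e22 e21) scalerA.
by move/(scalerIv e12).
Qed.

Hypothesis ua : a \in unitmx.

Lemma qrel_preserving_row_support c i j : a c i != 0 -> a c j != 0 -> q i j = 1.
Proof.
move=> aci acj; apply: (mulIf (mulf_neq0 aci acj)).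
by rewrite mul1r -qrel_preserving_coef_diag mulrC.
Qed.

Lemma qrel_preserving_col_support c d j :
  c != d -> a c j != 0 -> a d j != 0 -> q c d = 1.
Proof.
(* Otherwise rows c and d of a would be proportional. *)
move=> ncd acj adj; apply/eqP/negPn/negP => qcd1.
have rows_dep l : a d j * a c l = a c j * a d l.
  have [/andP[/eqP-> /eqP->]|] := boolP ((a c l == 0) && (a d l == 0)).
    by rewrite !mulr0.
  rewrite negb_and => nz.
  have qjl : q j l = 1.
    case/orP: nz; first exact: qrel_preserving_row_support acj.
    exact: qrel_preserving_row_support adj.
  have := qrel_preserving_coef j l ncd; rewrite qjl mul1r => e.
  have : (a c l * a d j - a c j * a d l) * (1 - q c d) = 0.
    by rewrite -(subrr (a c l * a d j + a d l * a c j * q c d)) {2}e; ring.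
  move/eqP; rewrite mulf_eq0 subr_eq0 subr_eq0 [1 == _]eq_sym (negbTE qcd1) orbF.
  by rewrite mulrC => /eqP.
pose v : 'rV[k]_n := a d j *: delta_mx 0 c - a c j *: delta_mx 0 d.
have va : v *m a = 0.
  by apply/rowP => l; rewrite mulmxBl -!scalemxAl -!rowE !mxE rows_dep subrr.
have := congr1 (mulmx^~ (invmx a)) va; rewrite mul0mx mulmxK // => /rowP/(_ d).
rewrite !mxE !eqxx eq_sym (negbTE ncd) mulr0 sub0r mulr1 => /eqP.
by rewrite oppr_eq0 (negbTE acj).
Qed.

Lemma qrel_preserving_support c d i j : a c i != 0 -> a d j != 0 -> q c d = q i j.
Proof.
move=> aci adj; have [ecd|ncd] := eqVneq c d.
  by subst d; rewrite hq.2 (qrel_preserving_row_support aci adj).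
have [acj|acj] := eqVneq (a c j) 0.
  have := qrel_preserving_coef i j ncd; rewrite acj !(mul0r, mulr0, add0r, addr0).
  move=> e; apply: (mulIf (mulf_neq0 aci adj)).
  by rewrite -e mulrC (mulrC (a d j)).
rewrite (qrel_preserving_col_support ncd acj adj).
by rewrite (qrel_preserving_row_support aci acj).
Qed.

End CoefficientConditions.

Lemma blockdiag_conj (k : fieldType) (n : nat) (q a b m : 'M[k]_n) :
  qmatrix q -> qrel_preserving q a -> qrel_preserving q b -> a *m b = 1%:M ->
  blockdiag q m -> blockdiag q (a *m m *m b).
Proof.
move=> hq qa qb ab bm u v; have [ua ub] := mulmx1_unit ab.
rewrite mxE => /sum_neq0[j]; rewrite mxE mulf_eq0 negb_or => /andP[/sum_neq0[i]].
rewrite mulf_eq0 negb_or => /andP[aui /bm/eqP/blk_eqP qij] bjv.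
apply/eqP/blk_eqP => w.
have : (a *m b) w w != 0 by rewrite ab mxE eqxx oner_neq0.
rewrite mxE => /sum_neq0[l]; rewrite mulf_eq0 negb_or => /andP[awl blw].
rewrite (qrel_preserving_support hq qa ua aui awl) qij.
exact: (qrel_preserving_support hq qb ub bjv blw).
Qed.

Theorem lemma4p4 (k : fieldType) (n : nat) (hn : (0 < n)%N) (q : 'M[k]_n)
    (hq : qmatrix q) (A : algType k) (x : 'I_n -> A) (hA : is_Oq q x) :
  [/\ (forall m, ImPhi q m -> Mq x m),
      ImPhi q 1%:M,
      (forall m1 m2, ImPhi q m1 -> ImPhi q m2 -> ImPhi q (m1 *m m2)),
      (forall m, ImPhi q m -> ImPhi q (invmx m))
    & (forall a m, Mq x a -> ImPhi q m -> ImPhi q (a *m m *m invmx a))].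
Proof.
split.
- move=> m /ImPhiP[um bm].
  apply: (Mq_of_qrel_preserving hA um); apply: (blockdiag_qrel_preserving hq) => //.
  exact: blockdiag_inv.
- by apply/ImPhiP; split; [exact: unitmx1 | exact: blockdiag1].
- move=> m1 m2 /ImPhiP[u1 b1] /ImPhiP[u2 b2]; apply/ImPhiP.
  by rewrite unitmx_mul u1 u2; split => //; exact: blockdiag_mul.
- move=> m /ImPhiP[um bm]; apply/ImPhiP.
  by rewrite unitmx_inv; split => //; exact: blockdiag_inv.
- move=> a m ha /ImPhiP[um bm]; have ua := ha.1; apply/ImPhiP; split.
    by rewrite !unitmx_mul ua um unitmx_inv.
  apply: (blockdiag_conj hq _ _ (mulmxV ua) bm).
    exact: (Mq_qrel_preserving hA ha).
  exact: (Mq_qrel_preserving hA (Mq_inv ha)).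
Qed.
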